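(* Let $N\ge 1$, let $G:\mathbb{R}_{\ge 0}\to\mathbb{R}_{\ge 0}$ be strictly convex and increasing with $G(0)=0$, and let $w_0,\dots,w_{N-1}>0$ be known demands. Consider the problem $$\min_{u\in\mathbb{R}_{\ge 0}^N}\ \sum_{k=0}^{N-1}G(u_k)\quad\text{s.t.}\quad \sum_{j=0}^{k}u_j\ \ge\ \sum_{j=0}^{k}w_j\quad\text{for all }k\in\{0,\dots,N-1\}.$$ (Equivalently: minimize $\sum_k G(u_k)$ subject to $x_0=0$, $x_{k+1}=x_k+u_k-w_k$, $x_k\ge 0$ for $k=1,\dots,N$.) Then $u^*=\mathrm{LS}(w_0,\dots,w_{N-1})$ is the optimal solution of this problem. Moreover, the optimal trajectory is non-increasing: $u^*_{k+1}\le u^*_k$ for all $k\in\{0,\dots,N-2\}$.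
   Context: Block-averaging (load shifting) procedure $\mathrm{LS}$: given a finite sequence $v=(v_0,\dots,v_{N-1})$ of positive reals, define indices $0=k_0<k_1<\dots<k_n=N$ recursively: if $k_l<N$, let $k_{l+1}=k_l+j^*$, where $j^*$ is the largest element of $\arg\max_{j\in\{1,\dots,N-k_l\}}\frac{1}{j}\sum_{i=k_l}^{k_l+j-1}v_i$; stop when $k_n=N$. Then $\mathrm{LS}(v)=(u_0,\dots,u_{N-1})$ with $u_i=\frac{1}{k_{l+1}-k_l}\sum_{m=k_l}^{k_{l+1}-1}v_m$ for all $k_l\le i<k_{l+1}$, $l=0,\dots,n-1$. (The paper's $\textsc{LoadShift}(\bm w,0,0)$ is $\mathrm{LS}(w)$.) *)

From mathcomp Require Import all_boot all_order all_algebra.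
From mathcomp Require Import reals.
Set Implicit Arguments. Unset Strict Implicit. Unset Printing Implicit Defensive.
Import Order.TTheory GRing.Theory Num.Theory.
Local Open Scope ring_scope.

Section LoadShift.
Variable R : realType.

(* average of the first j entries of v (j >= 1 in all uses) *)
Definition avg (v : seq R) (j : nat) : R := (\sum_(i < j) v`_i) / j%:R.

Definition is_argmax (v : seq R) (j : 'I_(size v).+1) : bool :=
  (0 < j)%N && [forall i : 'I_(size v).+1, (0 < i)%N ==> (avg v i <= avg v j)].

Definition best_len (v : seq R) : nat :=
  \max_(j < (size v).+1 | @is_argmax v j) (j : nat).

(* the recursion k_{l+1} = k_l + j^*, applied to the remaining suffix;
   fuel = size v is enough since each step removes j^* >= 1 entries *)
Fixpoint LS_fuel (fuel : nat) (v : seq R) : seq R :=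
  match fuel with
  | 0 => [::]
  | f.+1 =>
      if v is [::] then [::]
      else let j := best_len v in nseq j (avg v j) ++ LS_fuel f (drop j v)
  end.

Definition LS (v : seq R) : seq R := LS_fuel (size v) v.

Definition feasible (N : nat) (w u : seq R) : Prop :=
  size u = N /\ (forall k, (k < N)%N -> 0 <= u`_k) /\
  (forall k, (k < N)%N -> \sum_(j < k.+1) w`_j <= \sum_(j < k.+1) u`_j).

Definition cost (G : R -> R) (N : nat) (u : seq R) : R := \sum_(k < N) G u`_k.

End LoadShift.

(* Let u = LS(w) and U, W, U' be the partial sums of u, w and of a feasible
   competitor u'.  Since each block of LS is the longest one maximising the
   prefix average, u is positive and nonincreasing, U >= W, and U = W at the
   horizon and wherever u jumps.  With c_k the left derivative of the convex G
   at u_k, the tangent inequalities and summation by parts give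
     cost u' - cost u >= sum_k (c_k - c_{k+1}) (U'_{k+1} - U_{k+1}),
   with c_N = 0; c is nonincreasing, and c_k - c_{k+1} > 0 only at a jump or
   at the horizon, where U = W <= U'.  Uniqueness follows from strict
   convexity: the midpoint of two distinct optimal profiles is feasible and
   strictly cheaper. *)

From mathcomp Require Import all_boot all_order all_algebra.
From mathcomp Require Import classical_sets reals.
From mathcomp Require Import ring lra zify.
Import Order.TTheory GRing.Theory Num.Theory.
Local Open Scope ring_scope.
Local Open Scope classical_set_scope.
Set Implicit Arguments. Unset Strict Implicit.

Section Subgradient.
Variables (R : realType) (G : R -> R).
Hypothesis G_convex : forall x y t, 0 <= x -> 0 <= y -> 0 < t -> t < 1 ->
  G (t * x + (1 - t) * y) <= t * G x + (1 - t) * G y.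

Definition chord_slope (x y : R) := (G y - G x) / (y - x).

Lemma chord_slope_le x a y : 0 <= x -> x < a -> a < y ->
  chord_slope x a <= chord_slope a y.
Proof.
move=> x_ge0 xa ay; have yx : 0 < y - x by lra.
pose t := (y - a) / (y - x).
have a_conv : a = t * x + (1 - t) * y by rewrite /t; field; lra.
have t_gt0 : 0 < t by rewrite /t divr_gt0 //; lra.
have t_lt1 : t < 1 by rewrite /t ltr_pdivrMr //; lra.
have := @G_convex x y t x_ge0 ltac:(lra) t_gt0 t_lt1; rewrite -a_conv => Ga.
have Ga' : G a * (y - x) <= G x * (y - a) + G y * (a - x).
  have -> : G x * (y - a) + G y * (a - x) = (t * G x + (1 - t) * G y) * (y - x).
    by rewrite /t; field; lra.
  by rewrite ler_pM2r.
rewrite /chord_slope ler_pdivrMr; last lra.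
rewrite mulrAC ler_pdivlMr; last lra.
nra.
Qed.

Definition subgrad (a : R) := sup [set chord_slope x a | x in [set x | 0 <= x < a]].

Lemma has_sup_left_chord_slopes a : 0 < a ->
  has_sup [set chord_slope x a | x in [set x | 0 <= x < a]].
Proof.
move=> a_gt0; split; first by exists (chord_slope 0 a), 0; rewrite //= lexx.
exists (chord_slope a (a + 1)) => _ [x /= /andP[x_ge0 xa] <-].
by apply: chord_slope_le; rewrite ?ltrDl.
Qed.

Lemma chord_slope_le_subgrad x a : 0 <= x -> x < a -> chord_slope x a <= subgrad a.
Proof.
move=> x_ge0 xa; apply: sup_upper_bound.
  exact: has_sup_left_chord_slopes (le_lt_trans x_ge0 xa).
by exists x; rewrite //= x_ge0 xa.
Qed.

Lemma subgrad_le_chord_slope a y : 0 < a -> a < y -> subgrad a <= chord_slope a y.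
Proof.
move=> a_gt0 ay; apply: ge_sup; first by exists (chord_slope 0 a), 0; rewrite //= lexx.
by move=> _ [x /= /andP[x_ge0 xa] <-]; apply: chord_slope_le.
Qed.

Lemma subgrad_ge0 a : 0 < a -> G 0 <= G a -> 0 <= subgrad a.
Proof.
move=> a_gt0 G0a; apply: le_trans (chord_slope_le_subgrad (lexx 0) a_gt0).
by rewrite /chord_slope subr0 divr_ge0 ?subr_ge0 // ltW.
Qed.

Lemma le_subgrad a b : 0 < a -> a <= b -> subgrad a <= subgrad b.
Proof.
move=> a_gt0 ab; have [-> // | a_neq_b] := eqVneq a b.
have a_lt_b : a < b by rewrite lt_neqAle a_neq_b ab.
exact: le_trans (subgrad_le_chord_slope a_gt0 a_lt_b) (chord_slope_le_subgrad (ltW a_gt0) a_lt_b).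
Qed.

Lemma subgrad_tangent a y : 0 < a -> 0 <= y -> G a + subgrad a * (y - a) <= G y.
Proof.
move=> a_gt0 y_ge0; case: (ltgtP y a) => [ya | ay | ->]; last by rewrite subrr mulr0 addr0.
- have := chord_slope_le_subgrad y_ge0 ya; rewrite /chord_slope ler_pdivrMr; lra.
- have := subgrad_le_chord_slope a_gt0 ay; rewrite /chord_slope ler_pdivlMr; lra.
Qed.

End Subgradient.

Section LoadShiftSpec.
Variable R : realType.
Implicit Types (v r : seq R) (a : R).

Definition psum v k : R := \sum_(i < k) v`_i.

Lemma psum0 v : psum v 0 = 0.
Proof. by rewrite /psum big_ord0. Qed.

Lemma psumS v k : psum v k.+1 = psum v k + v`_k.
Proof. by rewrite /psum big_ord_recr. Qed.

Lemma psum_drop v j k : psum v (j + k) = psum v j + psum (drop j v) k.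
Proof.
elim: k => [|k IH]; first by rewrite addn0 psum0 addr0.
by rewrite addnS !psumS IH nth_drop addrA.
Qed.

Lemma psum_nseq_catl j a r k : (k <= j)%N -> psum (nseq j a ++ r) k = k%:R * a.
Proof.
elim: k => [|k IH] kj; first by rewrite psum0 mul0r.
by rewrite psumS IH 1?ltnW // nth_cat size_nseq kj nth_nseq kj mulrSr mulrDl mul1r.
Qed.

Lemma psum_nseq_catr j a r k : psum (nseq j a ++ r) (j + k) = j%:R * a + psum r k.
Proof.
rewrite psum_drop psum_nseq_catl //; congr (_ + psum _ k).
by rewrite drop_cat size_nseq ltnn subnn drop0.
Qed.

Lemma psum_gt0 v k : (forall i, (i < size v)%N -> 0 < v`_i) ->
  (0 < k <= size v)%N -> 0 < psum v k.
Proof.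
move=> v_gt0; elim: k => [//|[|k] IH] /andP[_ kv].
  by rewrite psumS psum0 add0r v_gt0.
by rewrite psumS addr_gt0 ?v_gt0 ?IH ?(ltnW kv).
Qed.

Lemma psum_avg v j : (0 < j)%N -> psum v j = j%:R * avg v j.
Proof. by move=> j_gt0; rewrite /avg mulrC divfK // pnatr_eq0 -lt0n. Qed.

Lemma avg_split v j k : (0 < j)%N -> (0 < k)%N ->
  avg v (j + k) = (j%:R * avg v j + k%:R * avg (drop j v) k) / (j + k)%:R.
Proof. by move=> j_gt0 k_gt0; rewrite -!psum_avg // -psum_drop. Qed.

Lemma is_argmax_exists v : v != [::] -> exists j, @is_argmax R v j.
Proof.
case: v => // x v _; pose P := fun i : 'I_(size (x :: v)).+1 => (0 < i)%N.
have [j j_gt0 j_max] := @arg_maxP _ _ _ ord_max P (avg (x :: v)) isT.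
exists j; apply/andP; split => //; apply/forallP => i; apply/implyP; exact: j_max.
Qed.

Lemma best_len_spec v : v != [::] ->
  [/\ (0 < best_len v <= size v)%N,
      forall i, (0 < i <= size v)%N -> avg v i <= avg v (best_len v) &
      forall i, (best_len v < i <= size v)%N -> avg v i < avg v (best_len v)].
Proof.
move=> v_nil; have [j0 j0_max] := is_argmax_exists v_nil.
have [j /andP[j_gt0 /forallP j_max] best_j] :=
  @bigop.eq_bigmax_cond _ (@is_argmax R v) val (introT card_gt0P (ex_intro _ j0 j0_max)).
have avg_le i : (0 < i <= size v)%N -> avg v i <= avg v j.
  by move=> /andP[i_gt0 iv]; have := j_max (Ordinal (iv : (i < (size v).+1)%N)); rewrite /= i_gt0.
rewrite /best_len best_j; split => //; first by rewrite j_gt0 -ltnS ltn_ord.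
move=> i /andP[ji iv]; rewrite lt_neqAle avg_le ?(leq_ltn_trans _ ji) ?iv // andbT.
apply/eqP => avg_eq; move: (ji); rewrite ltnNge -best_j => /negP; apply.
apply: (@bigop.leq_bigmax_cond _ _ _ (Ordinal (iv : (i < (size v).+1)%N))).
apply/andP; split; first exact: leq_ltn_trans ji.
apply/forallP => k; apply/implyP => k_gt0.
by rewrite avg_eq; apply: avg_le; rewrite k_gt0 -ltnS ltn_ord.
Qed.

(* The last two fields are the complementary-slackness conditions. *)
Record LS_spec v (u : seq R) : Prop := {
  LS_spec_size : size u = size v;
  LS_spec_gt0 : forall k, (k < size v)%N -> 0 < u`_k;
  LS_spec_nonincr : forall k, (k.+1 < size v)%N -> u`_k.+1 <= u`_k;
  LS_spec_psum_ge : forall k, (k <= size v)%N -> psum v k <= psum u k;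
  LS_spec_psum_end : psum v (size v) = psum u (size v);
  LS_spec_psum_jump : forall k, (k.+1 < size v)%N -> u`_k.+1 != u`_k ->
    psum v k.+1 = psum u k.+1 }.

Lemma LS_spec_nil : LS_spec [::] [::].
Proof. by split => // k; rewrite leqn0 => /eqP->. Qed.

Lemma LS_spec_nseq_cat v r j : (0 < j <= size v)%N ->
  (forall k, (0 < k <= j)%N -> avg v k <= avg v j) -> 0 < avg v j ->
  ((j < size v)%N -> r`_0 <= avg v j) ->
  LS_spec (drop j v) r -> LS_spec v (nseq j (avg v j) ++ r).
Proof.
set a := avg v j => /andP[j_gt0 jv] avg_le a_gt0 r0_le.
move=> [r_size r_gt0 r_nonincr r_ge r_end r_jump].
rewrite size_drop in r_size r_gt0 r_nonincr r_ge r_end r_jump.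
have nth_u k : (nseq j a ++ r)`_k = if (k < j)%N then a else r`_(k - j).
  by rewrite nth_cat size_nseq; case: ifP => // kj; rewrite nth_nseq kj.
have psum_vj : psum v j = j%:R * a by rewrite psum_avg.
have split_k k : (j <= k)%N -> k = (j + (k - j))%N by move=> jk; rewrite subnKC.
split.
- by rewrite size_cat size_nseq r_size subnKC.
- by move=> k kv; rewrite nth_u; case: ifP => // /negbT; rewrite -leqNgt => jk; apply: r_gt0; lia.
- move=> k kv; rewrite !nth_u; case: (ltngtP k.+1 j) => [kj | jk | kj].
  + by [].
  + by rewrite subSn //; apply: r_nonincr; lia.
  + by rewrite -kj subnn; apply: r0_le; rewrite -kj.
- move=> k kv; case: (leqP k j) => [kj | jk].
    rewrite psum_nseq_catl //; case: k kv kj => [|k] kv kj; first by rewrite !psum0 mul0r.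
    by rewrite psum_avg // ler_pM2l ?ltr0n // avg_le.
  by rewrite (split_k k (ltnW jk)) psum_nseq_catr psum_drop psum_vj lerD2l r_ge; lia.
- by rewrite (split_k _ jv) psum_nseq_catr psum_drop psum_vj r_end.
- move=> k kv; rewrite !nth_u; case: (ltngtP k.+1 j) => [kj | jk | kj].
  + by rewrite eqxx.
  + rewrite subSn // => jump.
    by rewrite (split_k k.+1 (ltnW jk)) psum_nseq_catr psum_drop psum_vj subSn // r_jump //; lia.
  + by rewrite kj psum_nseq_catl // psum_vj.
Qed.

Lemma LS_fuel_cons f v : v != [::] ->
  LS_fuel f.+1 v = nseq (best_len v) (avg v (best_len v)) ++ LS_fuel f (drop (best_len v) v).
Proof. by case: v. Qed.

Lemma avg_best_len_drop_lt v : v != [::] -> drop (best_len v) v != [::] ->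
  avg (drop (best_len v) v) (best_len (drop (best_len v) v)) < avg v (best_len v).
Proof.
set j := best_len v; set vd := drop j v => v_nil vd_nil.
have [/andP[j_gt0 jv] _ avg_lt] := best_len_spec v_nil.
have [/andP[k_gt0 k_size] _ _] := best_len_spec vd_nil.
set k := best_len vd in k_gt0 k_size *.
(* Otherwise the block of length [j + k] would also maximise the average. *)
have := avg_lt (j + k)%N; rewrite avg_split // -/vd natrD.
rewrite size_drop -/j in k_size; rewrite ltr_pdivrMr ?addr_gt0 ?ltr0n //.
have j_pos : (0 : R) < j%:R by rewrite ltr0n.
have k_pos : (0 : R) < k%:R by rewrite ltr0n.
move=> /(_ ltac:(lia)); nra.
Qed.

Lemma LS_fuel_spec f v : (size v <= f)%N ->
  (forall k, (k < size v)%N -> 0 < v`_k) -> LS_spec v (LS_fuel f v).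
Proof.
elim: f v => [|f IH] v; first by rewrite leqn0 => /nilP-> _; exact: LS_spec_nil.
have [-> _ _ | v_nil vf v_gt0] := eqVneq v [::]; first exact: LS_spec_nil.
have [/andP[j_gt0 jv] avg_le _] := best_len_spec v_nil.
rewrite LS_fuel_cons //; set j := best_len v in j_gt0 jv avg_le *.
have vd_gt0 k : (k < size (drop j v))%N -> 0 < (drop j v)`_k.
  by rewrite size_drop nth_drop => kv; apply: v_gt0; lia.
apply: LS_spec_nseq_cat => //; first by rewrite j_gt0.
- by move=> k /andP[k_gt0 kj]; apply: avg_le; rewrite k_gt0 (leq_trans kj).
- by rewrite /avg divr_gt0 ?ltr0n // psum_gt0 // j_gt0.
- move=> j_lt_v; have vd_nil : drop j v != [::] by rewrite -size_eq0 size_drop subn_eq0 -ltnNge.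
  case: f IH vf => [|f] IH vf; first by exfalso; lia.
  have [/andP[k_gt0 _] _ _] := best_len_spec vd_nil.
  rewrite LS_fuel_cons // nth_cat size_nseq k_gt0 nth_nseq k_gt0.
  exact/ltW/avg_best_len_drop_lt.
- by apply: IH vd_gt0; rewrite size_drop; lia.
Qed.

Lemma LS_spec_LS v : (forall k, (k < size v)%N -> 0 < v`_k) -> LS_spec v (LS v).
Proof. exact: LS_fuel_spec. Qed.

End LoadShiftSpec.

Lemma LS_spec_feasible (R : realType) (w u : seq R) :
  LS_spec w u -> feasible (size w) w u.
Proof.
case=> u_size u_gt0 _ u_ge _ _; split=> //.
by split=> k kw; [exact/ltW/u_gt0 | exact: u_ge k.+1 kw].
Qed.

Lemma summation_by_parts (R : comNzRingType) (c x : nat -> R) n :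
  \sum_(i < n) c i * x i =
  \sum_(i < n) (c i - c i.+1) * (\sum_(j < i.+1) x j) + c n * (\sum_(j < n) x j).
Proof.
elim: n => [|n IH]; first by rewrite !big_ord0 mulr0 addr0.
rewrite big_ord_recr IH /= [in RHS]big_ord_recr /= [\sum_(j < n.+1) x j]big_ord_recr /=.
ring.
Qed.

Section Optimality.
Variables (R : realType) (G : R -> R).
Hypothesis G_convex : forall x y t, 0 <= x -> 0 <= y -> 0 < t -> t < 1 ->
  G (t * x + (1 - t) * y) <= t * G x + (1 - t) * G y.
Hypothesis G_ge_G0 : forall x, 0 <= x -> G 0 <= G x.

Lemma LS_spec_cost_le (w us u : seq R) : LS_spec w us -> feasible (size w) w u ->
  cost G (size w) us <= cost G (size w) u.
Proof.
set N := size w => -[_ us_gt0 us_nonincr _ us_end us_jump] [_ [u_ge0 u_feas]].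
pose c i := if (i < N)%N then subgrad G us`_i else 0.
have tangent : \sum_(i < N) c i * (u`_i - us`_i) <= cost G N u - cost G N us.
  rewrite /cost -sumrB; apply: ler_sum => i _; rewrite /c ltn_ord.
  have := subgrad_tangent G_convex (us_gt0 i (ltn_ord i)) (u_ge0 i (ltn_ord i)); lra.
rewrite -subr_ge0; apply: le_trans tangent.
rewrite (summation_by_parts c (fun i => u`_i - us`_i)) /c ltnn mul0r addr0.
apply: sumr_ge0 => i _; rewrite ltn_ord.
rewrite sumrB -/(psum u i.+1) -/(psum us i.+1); case: (ltnP i.+1 N) => iN.
- have [-> | jump] := eqVneq us`_i.+1 us`_i; first by rewrite subrr mul0r.
  rewrite mulr_ge0 ?subr_ge0 ?le_subgrad ?us_gt0 ?us_nonincr // -us_jump //.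
  exact: u_feas.
- have iN' : i.+1 = N by have := ltn_ord i; lia.
  rewrite subr0 mulr_ge0 ?subgrad_ge0 ?G_ge_G0 ?us_gt0 ?(ltW (us_gt0 _ _)) //.
  by rewrite subr_ge0 iN' /N -us_end -/N -iN'; apply: u_feas.
Qed.

End Optimality.

Section Uniqueness.
Variables (R : realType) (G : R -> R).
Hypothesis G_midpoint_lt : forall x y, 0 <= x -> 0 <= y -> x != y ->
  G ((x + y) / 2) < (G x + G y) / 2.

Definition midseq N (u v : seq R) := mkseq (fun i => (u`_i + v`_i) / 2) N.

Lemma feasible_midseq N (w u v : seq R) :
  feasible N w u -> feasible N w v -> feasible N w (midseq N u v).
Proof.
move=> [u_size [u_ge0 u_feas]] [v_size [v_ge0 v_feas]].
split; first by rewrite size_mkseq.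
split=> k kN; first by rewrite nth_mkseq // divr_ge0 ?addr_ge0 ?u_ge0 ?v_ge0.
have -> : \sum_(j < k.+1) (midseq N u v)`_j =
    (\sum_(j < k.+1) u`_j + \sum_(j < k.+1) v`_j) / 2.
  rewrite -big_split big_distrl; apply: eq_bigr => j _.
  by rewrite nth_mkseq // (leq_trans (ltn_ord j)).
by have := u_feas k kN; have := v_feas k kN; lra.
Qed.

Lemma cost_midseq_lt N (w u v : seq R) : feasible N w u -> feasible N w v -> u != v ->
  cost G N (midseq N u v) < (cost G N u + cost G N v) / 2.
Proof.
move=> [u_size [u_ge0 _]] [v_size [v_ge0 _]] u_neq_v.
have /existsP[k uv_k] : [exists k : 'I_N, u`_k != v`_k].
  apply: contraNT u_neq_v; rewrite negb_exists => /forallP uv.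
  apply/eqP/(eq_from_nth (x0 := 0)) => [|i]; first by rewrite u_size v_size.
  by rewrite u_size => iN; apply/eqP/negbNE/(uv (Ordinal iN)).
have mid_le i : (i < N)%N -> G (midseq N u v)`_i <= (G u`_i + G v`_i) / 2.
  move=> iN; rewrite nth_mkseq //; have [-> | uv_i] := eqVneq u`_i v`_i.
    by rewrite !(_ : forall x : R, (x + x) / 2 = x) // => x; lra.
  by apply/ltW/G_midpoint_lt; rewrite ?u_ge0 ?v_ge0.
rewrite /cost -big_split big_distrl /= (bigD1 k) //= [X in _ < X](bigD1 k) //=.
rewrite ltr_leD //; last by apply: ler_sum => i _; exact: mid_le.
by rewrite nth_mkseq // G_midpoint_lt ?u_ge0 ?v_ge0.
Qed.

Lemma feasible_minimizer_unique N (w us u : seq R) : feasible N w us ->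
  (forall v, feasible N w v -> cost G N us <= cost G N v) ->
  feasible N w u -> cost G N u <= cost G N us -> u = us.
Proof.
move=> us_feas us_min u_feas cost_u; apply/eqP; apply: contraT => u_neq_us.
have := us_min _ (feasible_midseq u_feas us_feas).
by have := cost_midseq_lt u_feas us_feas u_neq_us; lra.
Qed.

End Uniqueness.

Theorem theorem1 (R : realType) (N : nat) (G : R -> R) (w : seq R) :
  (0 < N)%N ->
  size w = N ->
  (forall k, (k < N)%N -> 0 < w`_k) ->
  G 0 = 0 ->
  (forall x, 0 <= x -> 0 <= G x) ->
  (forall x y, 0 <= x -> x < y -> G x < G y) ->
  (forall x y t, 0 <= x -> 0 <= y -> x != y -> 0 < t -> t < 1 ->
     G (t * x + (1 - t) * y) < t * G x + (1 - t) * G y) ->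
  let us := LS w in
  [/\ feasible N w us,
      (forall u, feasible N w u -> cost G N us <= cost G N u),
      (forall u, feasible N w u -> cost G N u <= cost G N us -> u = us)
    & (forall k, (k.+1 < N)%N -> us`_k.+1 <= us`_k)].
Proof.
move=> _ <- w_gt0 G0 G_ge0 _ G_strict us.
have G_convex x y t : 0 <= x -> 0 <= y -> 0 < t -> t < 1 ->
    G (t * x + (1 - t) * y) <= t * G x + (1 - t) * G y.
  move=> x_ge0 y_ge0 t_gt0 t_lt1; have [-> | xy] := eqVneq x y; last exact/ltW/G_strict.
  by rewrite -!mulrDl subrKC !mul1r.
have G_midpoint_lt x y : 0 <= x -> 0 <= y -> x != y -> G ((x + y) / 2) < (G x + G y) / 2.
  move=> x_ge0 y_ge0 xy; have := @G_strict x y (1 / 2) x_ge0 y_ge0 xy ltac:(lra) ltac:(lra).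
  by rewrite !(_ : forall a b : R, 1 / 2 * a + (1 - 1 / 2) * b = (a + b) / 2) // => a b; lra.
have us_spec : LS_spec w us := LS_spec_LS w_gt0.
have us_feas := LS_spec_feasible us_spec.
have us_min u : feasible (size w) w u -> cost G (size w) us <= cost G (size w) u.
  by apply: LS_spec_cost_le => // x; rewrite G0; exact: G_ge0.
split=> //; first by move=> u; exact: feasible_minimizer_unique.
exact: LS_spec_nonincr us_spec.
Qed.
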